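(* Let $G$ be a compact Hausdorff topological group. If $X$ is a completely normal Hausdorff $G$-space, then $X$ is $G$-completely normal.
   Context: A space is completely normal if any two subsets $A,B$ with $\overline A\cap B=\emptyset=A\cap\overline B$ have disjoint open neighbourhoods. A $G$-space $X$ is $G$-completely normal if any two $G$-invariant subsets $A,B\subseteq X$ with $\overline A\cap B=\emptyset=A\cap\overline B$ have disjoint $G$-invariant open neighbourhoods. *)

From HB Require Import structures.
From mathcomp Require Import all_boot all_order all_algebra.
From mathcomp Require Import all_classical topology.
Set Implicit Arguments. Unset Strict Implicit. Unset Printing Implicit Defensive.
Local Open Scope classical_set_scope.

Definition topological_group (G : topologicalType)
    (mul : G -> G -> G) (inv : G -> G) (e : G) : Prop :=
  [/\ (forall a b c, mul a (mul b c) = mul (mul a b) c),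
      (forall a, mul e a = a /\ mul a e = a),
      (forall a, mul (inv a) a = e /\ mul a (inv a) = e),
      continuous (fun p : G * G => mul p.1 p.2) &
      continuous inv].

Definition G_space (G X : topologicalType)
    (mul : G -> G -> G) (e : G) (act : G -> X -> X) : Prop :=
  [/\ (forall x, act e x = x),
      (forall g h x, act (mul g h) x = act g (act h x)) &
      continuous (fun p : G * X => act p.1 p.2)].

Definition G_invariant (G X : Type) (act : G -> X -> X) (A : set X) : Prop :=
  forall g x, A x -> A (act g x).

Definition completely_normal (X : topologicalType) : Prop :=
  forall A B : set X,
    closure A `&` B = set0 -> A `&` closure B = set0 ->
    exists U V : set X,
      [/\ open U, open V, A `<=` U, B `<=` V & U `&` V = set0].

Definition G_completely_normal (G X : topologicalType) (act : G -> X -> X) : Prop :=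
  forall A B : set X,
    G_invariant act A -> G_invariant act B ->
    closure A `&` B = set0 -> A `&` closure B = set0 ->
    exists U V : set X,
      [/\ open U /\ open V, G_invariant act U /\ G_invariant act V,
          A `<=` U, B `<=` V & U `&` V = set0].

(* A G-invariant set contained in an open set U is contained in the set of
   points whose whole orbit lies in U.  By compactness of G (tube lemma) this
   set is again open, so shrinking the separating neighbourhoods provided by
   complete normality of X to these sets yields invariant ones. *)
From mathcomp Require Import all_boot all_order all_algebra.
From mathcomp Require Import all_classical topology.
Set Implicit Arguments. Unset Strict Implicit. Unset Printing Implicit Defensive.
Local Open Scope classical_set_scope.

Definition invariant_core (G X : Type) (act : G -> X -> X) (U : set X) : set X :=
  [set x | forall g, U (act g x)].

Lemma open_invariant_core (G X : topologicalType) (act : G -> X -> X) (U : set X) :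
  compact [set: G] -> continuous (fun p : G * X => act p.1 p.2) -> open U ->
  open (invariant_core act U).
Proof.
move=> cG cact oU; rewrite openE => x0 Ux0.
have near_cover := iffLR (compact_near_coveringP _) cG X (nbhs x0)
  (fun x g => U (act g x)).
have : \forall x \near nbhs x0, [set: G] `<=` (fun g => U (act g x)).
  apply: near_cover => g _; apply: (cact (g, x0)).
  exact: open_nbhs_nbhs.
by apply: filterS => x Ux g; apply: Ux.
Qed.

Lemma invariant_core_invariant (G X : Type) (mul : G -> G -> G)
    (act : G -> X -> X) (U : set X) :
  (forall g h x, act (mul g h) x = act g (act h x)) ->
  G_invariant act (invariant_core act U).
Proof. by move=> actM g x Ux h; rewrite -actM; apply: Ux. Qed.

Lemma sub_invariant_core (G X : Type) (act : G -> X -> X) (A U : set X) :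
  G_invariant act A -> A `<=` U -> A `<=` invariant_core act U.
Proof. by move=> iA AU x Ax g; apply/AU/iA. Qed.

Lemma invariant_core_sub (G X : Type) (e : G) (act : G -> X -> X) (U : set X) :
  (forall x, act e x = x) -> invariant_core act U `<=` U.
Proof. by move=> act1 x Ux; rewrite -(act1 x); apply: Ux. Qed.

Theorem lemma3p12 (G X : topologicalType)
    (mul : G -> G -> G) (inv : G -> G) (e : G) (act : G -> X -> X) :
  topological_group mul inv e ->
  compact [set: G] -> hausdorff_space G ->
  G_space mul e act ->
  completely_normal X -> hausdorff_space X ->
  G_completely_normal act.
Proof.
move=> _ cG _ [act1 actM cact] cnX _ A B iA iB clAB AclB.
have [U [V [oU oV AU BV UV0]]] := cnX A B clAB AclB.
exists (invariant_core act U), (invariant_core act V); split.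
- by split; apply: open_invariant_core.
- by split; apply: invariant_core_invariant actM.
- exact: sub_invariant_core.
- exact: sub_invariant_core.
- rewrite -subset0 -UV0 => x [Ux Vx].
  by split; [exact: (invariant_core_sub act1 Ux) | exact: (invariant_core_sub act1 Vx)].
Qed.
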